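(* Let $\mathbf{M}\in\mathbb{R}^{N\times N}$ be symmetric with eigenvalues $\lambda_1>\lambda_2\ge\lambda_3\ge\cdots\ge\lambda_N$, and let $g(\bm{x})=-\tfrac12\bm{x}^\top\mathbf{M}\bm{x}$ be restricted to the unit sphere $\mathbb{S}^{N-1}$. Set $\epsilon=0.2(\lambda_1-\lambda_2)$ and $\eta=0.3(\lambda_1-\lambda_2)$. Then for every $\bm{x}\in\mathbb{S}^{N-1}$ with $\|\mathrm{grad}\,g(\bm{x})\|_2\le\epsilon$ we have $|\lambda_{\min}(\mathrm{hess}\,g(\bm{x}))|\ge\eta$.
   Context: $\mathbb{S}^{N-1}=\{\bm{x}\in\mathbb{R}^N:\|\bm{x}\|_2=1\}$. The Riemannian gradient and Hessian of $g$ on the sphere are $\mathrm{grad}\,g(\bm{x})=(\bm{x}\bm{x}^\top-\mathbf{I}_N)\mathbf{M}\bm{x}$ and $\mathrm{hess}\,g(\bm{x})=(\mathbf{I}_N-\bm{x}\bm{x}^\top)(\bm{x}^\top\mathbf{M}\bm{x}\,\mathbf{I}_N-\mathbf{M})(\mathbf{I}_N-\bm{x}\bm{x}^\top)$, the latter regarded as a quadratic form on the tangent space $\mathcal{T}_{\bm{x}}\mathbb{S}^{N-1}=\{\bm{u}\in\mathbb{R}^N:\bm{x}^\top\bm{u}=0\}$; thus $\lambda_{\min}(\mathrm{hess}\,g(\bm{x}))=\min\{\bm{u}^\top\mathrm{hess}\,g(\bm{x})\bm{u}:\bm{u}\in\mathcal{T}_{\bm{x}}\mathbb{S}^{N-1},\|\bm{u}\|_2=1\}=\min\{\bm{x}^\top\mathbf{M}\bm{x}-\bm{u}^\top\mathbf{M}\bm{u}:\bm{x}^\top\bm{u}=0,\|\bm{u}\|_2=1\}$.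 *)

From HB Require Import structures.
From mathcomp Require Import all_boot all_order all_algebra.
From mathcomp Require Import classical_sets reals.
Set Implicit Arguments. Unset Strict Implicit. Unset Printing Implicit Defensive.
Import Order.TTheory GRing.Theory Num.Theory.
Local Open Scope ring_scope.
Local Open Scope classical_set_scope.

Section Defs.
Variables (R : realType) (N : nat).

Definition dotv (u v : 'cV[R]_N) : R := (u^T *m v) 0 0.
Definition norm2 (u : 'cV[R]_N) : R := Num.sqrt (dotv u u).

Definition on_sphere (x : 'cV[R]_N) : Prop := norm2 x = 1.
Definition tangent (x u : 'cV[R]_N) : Prop := dotv x u = 0.

Definition g (M : 'M[R]_N) (x : 'cV[R]_N) : R := - (1 / 2) * dotv x (M *m x).

Definition rgrad (M : 'M[R]_N) (x : 'cV[R]_N) : 'cV[R]_N :=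
  (x *m x^T - 1%:M) *m M *m x.

Definition rhess (M : 'M[R]_N) (x : 'cV[R]_N) : 'M[R]_N :=
  (1%:M - x *m x^T) *m (dotv x (M *m x) *: 1%:M - M) *m (1%:M - x *m x^T).

(* smallest eigenvalue of the Hessian as a quadratic form on the tangent space:
   min { u^T hess u : x^T u = 0, ||u||_2 = 1 }  (taken as an infimum in R) *)
Definition lambda_min_hess (M : 'M[R]_N) (x : 'cV[R]_N) : R :=
  inf [set dotv u (rhess M x *m u) | u in [set u | tangent x u /\ norm2 u = 1]].

End Defs.

From HB Require Import structures.
From mathcomp Require Import all_boot all_order all_algebra.
From mathcomp Require Import classical_sets reals.
From mathcomp Require Import complex sesquilinear spectral.
From mathcomp Require Import ring lra.
Import Order.TTheory GRing.Theory Num.Theory.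
Set Implicit Arguments. Unset Strict Implicit. Unset Printing Implicit Defensive.
Local Open Scope ring_scope.

(* Let v1 be a unit eigenvector of the symmetric matrix M for its simple top
   eigenvalue l0, let l1 be the second eigenvalue, del = l0 - l1, and let
   rho = x^T M x for x on the sphere.  The whole argument rests on the
   "spectral-gap Rayleigh bound"
       u^T M u <= l1 |u|^2 + del (v1.u)^2,
   together with the formulas grad g(x) = rho x - M x and
   hess g(x)[u,u] = rho - u^T M u for unit tangent vectors u.
   If |grad g(x)| <= del/5 we split on rho:
   - if rho >= l1 + del/2, the component of x orthogonal to v1 is small
     (1 - (v1.x)^2 <= 4/25), so every unit tangent vector has (v1.u)^2 <= 4/25
     and the Hessian is >= 17 del/50 on the tangent space;
   - if rho < l1 + del/2, the component along v1 is small ((v1.x)^2 <= 4/25),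
     and the tangent direction obtained by rotating x toward v1 has
     curvature <= -17 del/50.
   The file first develops elementary Euclidean geometry, then the calculus
   on the sphere and the two cases above for an abstract (M, v1, l0, l1)
   satisfying the Rayleigh bound, and finally derives the Rayleigh bound from
   the hypotheses on the characteristic polynomial via the complex spectral
   theorem for normal matrices. *)

Section InnerProduct.
Variables (R : realType) (N : nat).
Implicit Types (u v w x : 'cV[R]_N).

Lemma dotvE u v : dotv u v = \sum_i u i 0 * v i 0.
Proof. by rewrite /dotv mxE; apply: eq_bigr => i _; rewrite mxE. Qed.

Lemma dotvC u v : dotv u v = dotv v u.
Proof. by rewrite !dotvE; apply: eq_bigr => i _; rewrite mulrC. Qed.

Lemma dotvDr u v w : dotv u (v + w) = dotv u v + dotv u w.
Proof. by rewrite !dotvE -big_split; apply: eq_bigr => i _; rewrite mxE mulrDr. Qed.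

Lemma dotvZr a u v : dotv u (a *: v) = a * dotv u v.
Proof. by rewrite !dotvE mulr_sumr; apply: eq_bigr => i _; rewrite mxE mulrCA. Qed.

Lemma dotvBr u v w : dotv u (v - w) = dotv u v - dotv u w.
Proof. by rewrite dotvDr -scaleN1r dotvZr mulN1r. Qed.

Lemma dotvDl u v w : dotv (v + w) u = dotv v u + dotv w u.
Proof. by rewrite dotvC dotvDr !(dotvC u). Qed.

Lemma dotvZl a u v : dotv (a *: v) u = a * dotv v u.
Proof. by rewrite dotvC dotvZr dotvC. Qed.

Lemma dotvBl u v w : dotv (v - w) u = dotv v u - dotv w u.
Proof. by rewrite dotvC dotvBr !(dotvC u). Qed.

Lemma dotv_mul (B : 'M[R]_N) u v : dotv u (B *m v) = dotv (B^T *m u) v.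
Proof. by rewrite /dotv trmx_mul trmxK mulmxA. Qed.

Lemma dotv_ge0 u : 0 <= dotv u u.
Proof. by rewrite dotvE sumr_ge0 // => i _; rewrite -expr2 sqr_ge0. Qed.

Lemma dotv_eq0 u : dotv u u = 0 -> u = 0.
Proof.
rewrite dotvE => /eqP; rewrite psumr_eq0 => [/allP u0|i _]; last first.
  by rewrite -expr2 sqr_ge0.
apply/matrixP => i j; rewrite ord1 mxE.
by have /implyP/(_ isT) := u0 i (mem_index_enum _); rewrite mulf_eq0 orbb => /eqP.
Qed.

Lemma dotv_delta (i : 'I_N) v : dotv (delta_mx i 0) v = v i 0.
Proof.
rewrite dotvE (bigD1 i) //= big1 ?addr0 => [|j ji]; rewrite !mxE.
  by rewrite !eqxx mul1r.
by rewrite (negbTE ji) mul0r.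
Qed.

Lemma on_sphereE u : on_sphere u <-> dotv u u = 1.
Proof.
rewrite /on_sphere /norm2; split => [u1|->]; last by rewrite sqrtr1.
by rewrite -(sqr_sqrtr (dotv_ge0 u)) u1 expr1n.
Qed.

Lemma norm2_sqr u : norm2 u ^+ 2 = dotv u u.
Proof. by rewrite /norm2 sqr_sqrtr // dotv_ge0. Qed.

Lemma cauchy_schwarz u v : (dotv u v)^+2 <= dotv u u * dotv v v.
Proof.
have [->|u0] := eqVneq u 0.
  by rewrite /dotv trmx0 !mul0mx mxE expr0n mul0r.
have uu : 0 < dotv u u by rewrite lt_def dotv_ge0 andbT; apply: contra u0 => /eqP/dotv_eq0 ->.
have := dotv_ge0 (dotv u u *: v - dotv u v *: u).
rewrite !(dotvBl, dotvBr, dotvZl, dotvZr) (dotvC v u) => h; nra.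
Qed.

Lemma bessel x u v : dotv x x = 1 -> dotv u u = 1 -> dotv x u = 0 ->
  dotv v v = 1 -> (dotv v x)^+2 + (dotv v u)^+2 <= 1.
Proof.
move=> xx uu xu vv.
have := dotv_ge0 (v - dotv v x *: x - dotv v u *: u).
rewrite !(dotvBl, dotvBr, dotvZl, dotvZr) xx uu vv xu (dotvC u x) xu.
rewrite (dotvC x v) (dotvC u v) => h; nra.
Qed.

Lemma normalized_rejection x v : dotv x x = 1 -> dotv v v = 1 ->
  (dotv x v)^+2 < 1 ->
  let c := dotv x v in let t := (Num.sqrt (1 - c^+2))^-1 in
  [/\ dotv x (t *: (v - c *: x)) = 0,
      dotv (t *: (v - c *: x)) (t *: (v - c *: x)) = 1 &
      t^+2 * (1 - c^+2) = 1].
Proof.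
move=> xx vv hc c t.
have c1 : 0 < 1 - c^+2 by rewrite subr_gt0.
have tc : t^+2 * (1 - c^+2) = 1.
  by rewrite /t exprVn sqr_sqrtr ?ltW // mulVf // gt_eqF.
split => //; first by rewrite dotvZr dotvBr dotvZr xx -/c mulr1 subrr mulr0.
rewrite dotvZl dotvZr !(dotvBl, dotvBr, dotvZl, dotvZr) xx vv (dotvC v x) -/c.
by rewrite -[RHS]tc; ring.
Qed.

(* In dimension at least 2 every point of the sphere has a unit tangent
   vector: some coordinate vector is not parallel to it. *)
Lemma exists_unit_tangent x : (1 < N)%N -> dotv x x = 1 ->
  exists u, dotv x u = 0 /\ dotv u u = 1.
Proof.
move=> N2 xx.
have tangent_from (i : 'I_N) : (x i 0)^+2 < 1 ->
    exists u, dotv x u = 0 /\ dotv u u = 1.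
  move=> xi; pose e : 'cV[R]_N := delta_mx i 0.
  have ee : dotv e e = 1 by rewrite dotv_delta mxE !eqxx.
  have xe : (dotv x e)^+2 < 1 by rewrite dotvC dotv_delta.
  have [h1 h2 _] := normalized_rejection xx ee xe.
  by eexists; split; [exact: h1 | exact: h2].
pose i0 : 'I_N := Ordinal (ltnW N2); pose i1 : 'I_N := Ordinal N2.
have [x0|x0] := ltrP ((x i0 0)^+2) 1; first exact: tangent_from x0.
have [x1|x1] := ltrP ((x i1 0)^+2) 1; first exact: tangent_from x1.
exfalso; move: xx; rewrite dotvE (bigD1 i0) //= (bigD1 i1) //=.
have : 0 <= \sum_(i | (i != i0) && (i != i1)) x i 0 * x i 0.
  by apply: sumr_ge0 => i _; rewrite -expr2 sqr_ge0.
rewrite -!expr2 => h; lra.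
Qed.

End InnerProduct.

Section SphereCalculus.
Variables (R : realType) (N : nat) (M : 'M[R]_N).
Implicit Types (u x : 'cV[R]_N).

Lemma mx11_mulr x (B : 'M[R]_1) : x *m B = B 0 0 *: x.
Proof. by rewrite {1}[B]mx11_scalar mul_mx_scalar. Qed.

Lemma rgradE x : rgrad M x = dotv x (M *m x) *: x - M *m x.
Proof.
rewrite /rgrad mulmxBl mul1mx mulmxBl -!mulmxA mx11_mulr.
by rewrite /dotv mulmxA.
Qed.

Lemma rhessE x u : tangent x u ->
  dotv u (rhess M x *m u) = dotv x (M *m x) * dotv u u - dotv u (M *m u).
Proof.
move=> xu; set P := 1%:M - x *m x^T.
have Pu : P *m u = u.
  by rewrite /P mulmxBl mul1mx -mulmxA mx11_mulr -/(dotv x u) xu scale0r subr0.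
have PT : P^T = P by rewrite /P linearB /= trmx1 trmx_mul trmxK.
rewrite /rhess -/P -!mulmxA Pu dotv_mul PT Pu.
by rewrite mulmxBl dotvBr -scalemxAl mul1mx dotvZr.
Qed.

Lemma hess_value_unit x u : tangent x u -> dotv u u = 1 ->
  dotv u (rhess M x *m u) = dotv x (M *m x) - dotv u (M *m u).
Proof. by move=> xu uu; rewrite rhessE // uu mulr1. Qed.

(* Lower and upper bounds for lambda_min_hess from its definition as an
   infimum; the upper bound needs the set to be bounded below. *)
Lemma lambda_min_hess_ge x a : (exists u, tangent x u /\ dotv u u = 1) ->
  (forall u, tangent x u -> dotv u u = 1 -> a <= dotv x (M *m x) - dotv u (M *m u)) ->
  a <= lambda_min_hess M x.
Proof.
move=> [u0 [xu0 /on_sphereE u0u0]] lb; apply: lb_le_inf.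
  by exists (dotv u0 (rhess M x *m u0)); exists u0.
by move=> _ [u [xu /on_sphereE uu] <-]; rewrite hess_value_unit //; apply: lb.
Qed.

Lemma lambda_min_hess_le x u b :
  (forall v, dotv v v = 1 -> dotv v (M *m v) <= b) ->
  tangent x u -> dotv u u = 1 ->
  lambda_min_hess M x <= dotv x (M *m x) - dotv u (M *m u).
Proof.
move=> ub xu uu; rewrite -hess_value_unit //; apply: ge_inf; last first.
  by exists u => //; split => //; apply/on_sphereE.
exists (dotv x (M *m x) - b) => _ [v [xv /on_sphereE vv] <-].
by rewrite hess_value_unit // lerD2l lerN2 ub.
Qed.

End SphereCalculus.

Section SimpleTopEigenvalue.
Variables (R : realType) (N : nat) (M : 'M[R]_N) (l0 l1 : R) (v1 : 'cV[R]_N).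
Hypothesis Msym : M^T = M.
Hypothesis gap : l1 < l0.
Hypothesis Mv1 : M *m v1 = l0 *: v1.
Hypothesis v1_unit : dotv v1 v1 = 1.
Hypothesis rayleigh_gap :
  forall u, dotv u (M *m u) <= l1 * dotv u u + (l0 - l1) * (dotv v1 u)^+2.
Implicit Types (u x : 'cV[R]_N).

Local Notation rho x := (dotv x (M *m x)).
Local Notation del := (l0 - l1).

Lemma rayleigh_le_top u : dotv u u = 1 -> rho u <= l0.
Proof.
move=> uu; have := cauchy_schwarz v1 u; rewrite v1_unit uu mul1r => cs.
have d0 : 0 <= l0 - l1 by rewrite subr_ge0 ltW.
have h1 : 0 <= (l0 - l1) * (1 - (dotv v1 u)^+2) by rewrite mulr_ge0 // subr_ge0.
have := rayleigh_gap u; rewrite uu mulr1 => h; lra.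
Qed.

(* Symmetry of M makes v1 an eigenvector on the left as well. *)
Lemma top_dot_mul u : dotv v1 (M *m u) = l0 * dotv v1 u.
Proof. by rewrite dotv_mul Msym Mv1 dotvZl. Qed.

Lemma grad_bound_top x :
  (l0 - rho x)^+2 * (dotv v1 x)^+2 <= dotv (rgrad M x) (rgrad M x).
Proof.
have := cauchy_schwarz v1 (rgrad M x); rewrite v1_unit mul1r.
suff -> : (dotv v1 (rgrad M x))^+2 = (l0 - rho x)^+2 * (dotv v1 x)^+2 by [].
by rewrite rgradE dotvBr dotvZr top_dot_mul; ring.
Qed.

Lemma grad_bound_rest x : dotv x x = 1 -> l1 <= rho x ->
  (rho x - l1)^+2 * (1 - (dotv v1 x)^+2) <= dotv (rgrad M x) (rgrad M x).
Proof.
move=> xx l1_rho; set c := dotv v1 x; set G := dotv (rgrad M x) (rgrad M x).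
set w := x - c *: v1; set s := 1 - c^+2.
have v1w : dotv v1 w = 0 by rewrite dotvBr dotvZr v1_unit /c; ring.
have ww : dotv w w = s.
  by rewrite !(dotvBl, dotvBr, dotvZl, dotvZr) xx v1_unit (dotvC x v1) /s /c; ring.
have wMw : rho w = rho x - c^+2 * l0.
  rewrite mulmxBr -scalemxAr Mv1 !(dotvBl, dotvBr, dotvZl, dotvZr) v1_unit.
  by rewrite top_dot_mul (dotvC x v1) -/c; ring.
have wg : dotv w (rgrad M x) = c^+2 * (l0 - rho x).
  rewrite rgradE !(dotvBl, dotvBr, dotvZl, dotvZr) top_dot_mul xx.
  by rewrite -/c; ring.
have cs := cauchy_schwarz w (rgrad M x); rewrite ww wg -/G in cs.
have ray := rayleigh_gap w; rewrite wMw v1w ww expr0n mulr0 addr0 in ray.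
have rho_top := rayleigh_le_top xx.
have G0 : 0 <= G := dotv_ge0 _.
have s0 : 0 <= s by rewrite subr_ge0 -(mul1r 1) -{1}v1_unit -xx cauchy_schwarz.
have [->|s_pos] := eqVneq s 0; first by rewrite mulr0.
have {}s_pos : 0 < s by rewrite lt_def s_pos.
have q0 : 0 <= c^+2 * (l0 - rho x) by rewrite mulr_ge0 ?sqr_ge0 // subr_ge0.
have p0 : 0 <= (rho x - l1) * s by rewrite mulr_ge0 // subr_ge0.
have sq : ((rho x - l1) * s)^+2 <= s * G.
  apply: le_trans cs; rewrite ler_sqr ?nnegrE //.
  have -> : (rho x - l1) * s = (rho x - c^+2 * l0 - l1 * s) + c^+2 * (l0 - rho x).
    by rewrite /s; ring.
  lra.
rewrite -(ler_pM2l s_pos).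
by have -> : s * ((rho x - l1)^+2 * s) = ((rho x - l1) * s)^+2 by ring.
Qed.

(* Near the top eigenvector the Hessian is bounded below on the tangent space:
   a unit tangent vector carries at most the mass 1 - c^2 along v1. *)
Lemma hess_lower_bound x u : dotv x x = 1 -> tangent x u -> dotv u u = 1 ->
  (rho x - l1) - (l0 - l1) * (1 - (dotv v1 x)^+2) <= rho x - rho u.
Proof.
move=> xx xu uu; have := bessel xx uu xu v1_unit => bes.
have := rayleigh_gap u; rewrite uu mulr1 => ray.
have : (l0 - l1) * (dotv v1 u)^+2 <= (l0 - l1) * (1 - (dotv v1 x)^+2).
  by apply: ler_wpM2l; [rewrite subr_ge0 ltW | lra].
lra.
Qed.

(* Away from the top eigenvector, rotating x toward v1 inside the sphere gives
   a tangent direction of negative curvature. *)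
Lemma top_tangent x : dotv x x = 1 -> (dotv v1 x)^+2 < 1 ->
  exists u, [/\ tangent x u, dotv u u = 1 &
    (1 - (dotv v1 x)^+2) * (rho x - rho u) = (rho x - l0) * (1 - 2 * (dotv v1 x)^+2)].
Proof.
move=> xx c1; have c1' : (dotv x v1)^+2 < 1 by rewrite dotvC.
have [xu uu tc] := normalized_rejection xx v1_unit c1'.
move: xu uu tc; rewrite (dotvC x v1); set c := dotv v1 x.
set t := (Num.sqrt _)^-1 => xu uu tc.
exists (t *: (v1 - c *: x)); split => //.
rewrite -scalemxAr mulmxBr -scalemxAr Mv1 !(dotvZl, dotvZr, dotvBl, dotvBr).
rewrite v1_unit top_dot_mul (dotvC x v1) -/c.
transitivity ((1 - c^+2) * rho x -
  t^+2 * (1 - c^+2) * (l0 - 2 * l0 * c^+2 + c^+2 * rho x)); first by ring.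
by rewrite tc; ring.
Qed.

(* If rho x is in the upper half of the gap, x is close to +-v1 and the
   Hessian is positive definite on the tangent space. *)
Lemma hess_min_near_top x : (1 < N)%N -> dotv x x = 1 ->
  dotv (rgrad M x) (rgrad M x) <= (del / 5)^+2 -> l1 + del / 2 <= rho x ->
  3 * del / 10 <= lambda_min_hess M x.
Proof.
move=> N2 x_unit small_grad upper; set c := dotv v1 x.
have del_gt0 : 0 < del by rewrite subr_gt0.
have l1_rho : l1 <= rho x by lra.
have rest := le_trans (grad_bound_rest x_unit l1_rho) small_grad.
have c1 : c^+2 <= 1 by rewrite -(mulr1 1) -{1}v1_unit -x_unit cauchy_schwarz.
have mass : 1 - c^+2 <= 4 / 25.
  have : (del / 2)^+2 * (1 - c^+2) <= (rho x - l1)^+2 * (1 - c^+2).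
    by rewrite ler_wpM2r ?subr_ge0 // ler_sqr ?nnegrE; lra.
  move=> /le_trans/(_ rest); rewrite !expr_div_n => h.
  have d2 : 0 < del^+2 by rewrite exprn_gt0.
  nra.
apply: lambda_min_hess_ge; first exact: exists_unit_tangent.
move=> u xu uu; have := hess_lower_bound x_unit xu uu.
have : del * (1 - c^+2) <= del * (4 / 25) by rewrite ler_wpM2l // ltW.
rewrite -/c; lra.
Qed.

(* If rho x is in the lower half of the gap, x is nearly orthogonal to v1 and
   moving toward v1 is a direction of negative curvature. *)
Lemma hess_min_away_from_top x : dotv x x = 1 ->
  dotv (rgrad M x) (rgrad M x) <= (del / 5)^+2 -> rho x < l1 + del / 2 ->
  lambda_min_hess M x <= - (3 * del / 10).
Proof.
move=> x_unit small_grad lower; set c := dotv v1 x.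
have del_gt0 : 0 < del by rewrite subr_gt0.
have top : (l0 - rho x)^+2 * c^+2 <= (del / 5)^+2 :=
  le_trans (grad_bound_top x) small_grad.
have mass : c^+2 <= 4 / 25.
  have : (del / 2)^+2 * c^+2 <= (l0 - rho x)^+2 * c^+2.
    by rewrite ler_wpM2r ?sqr_ge0 // ler_sqr ?nnegrE; lra.
  move=> /le_trans/(_ top); rewrite !expr_div_n => h.
  have d2 : 0 < del^+2 by rewrite exprn_gt0.
  nra.
have c0 : 0 <= c^+2 := sqr_ge0 c.
have c1 : c^+2 < 1 by lra.
have [u [xu uu curv]] := top_tangent x_unit c1.
apply: le_trans (lambda_min_hess_le rayleigh_le_top xu uu) _.
rewrite -/c in curv.
have : (rho x - l0) * (1 - 2 * c^+2) <= - (17 / 50) * del by nra.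
nra.
Qed.

Lemma hess_min_gap x : (1 < N)%N -> dotv x x = 1 ->
  dotv (rgrad M x) (rgrad M x) <= (del / 5)^+2 ->
  3 * del / 10 <= `|lambda_min_hess M x|.
Proof.
move=> N2 x_unit small_grad.
have [upper|lower] := lerP (l1 + del / 2) (rho x).
  exact: le_trans (hess_min_near_top N2 x_unit small_grad upper) (ler_norm _).
rewrite -normrN; apply: le_trans (ler_norm _); rewrite lerNr.
exact: hess_min_away_from_top.
Qed.

End SimpleTopEigenvalue.

Lemma unit_eigenvector (R : realType) N (M : 'M[R]_N) a :
  M^T = M -> root (char_poly M) a ->
  exists2 v : 'cV[R]_N, M *m v = a *: v & dotv v v = 1.
Proof.
move=> Msym; rewrite -eigenvalue_root_char => /eigenvalueP [v vM v0].
have Mw : M *m v^T = a *: v^T by rewrite -{1}Msym -trmx_mul vM linearZ.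
have ww : 0 < dotv v^T v^T.
  rewrite lt_def dotv_ge0 andbT; apply: contra v0 => /eqP/dotv_eq0.
  by move/(congr1 trmx); rewrite trmxK trmx0 => ->.
exists ((Num.sqrt (dotv v^T v^T))^-1 *: v^T).
  by rewrite -scalemxAr Mw !scalerA mulrC.
rewrite dotvZl dotvZr mulrA -expr2 exprVn sqr_sqrtr ?ltW //.
by rewrite mulVf ?gt_eqF.
Qed.

Lemma char_poly_similar (F : fieldType) n (Q P D : 'M[F]_n) :
  Q *m P = 1%:M -> char_poly (Q *m D *m P) = char_poly D.
Proof.
move=> QP; rewrite /char_poly /char_poly_mx !map_mxM.
set Qp := map_mx _ Q; set Pp := map_mx _ P; set Dp := map_mx _ D.
have QPp : Qp *m Pp = 1%:M by rewrite -map_mxM QP map_mx1.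
have -> : 'X%:M - Qp *m Dp *m Pp = Qp *m ('X%:M - Dp) *m Pp.
  by rewrite mulmxBr mulmxBl scalar_mxC -(mulmxA _ Qp) QPp mulmx1.
rewrite !det_mulmx mulrC mulrA -det_mulmx.
by rewrite det_mulmx [\det Pp * _]mulrC -det_mulmx QPp det1 mul1r.
Qed.

(* Spectral decomposition of a real symmetric matrix, obtained from the
   complex spectral theorem for normal matrices: in the unitary coordinates
   [coords u] the quadratic forms u.v and u.Mv become diagonal. *)
Section SymmetricSpectrum.
Variables (R : realType) (N : nat) (M : 'M[R]_N).
Hypothesis Msym : M^T = M.
Local Notation C := R[i].
Implicit Types (u v : 'cV[R]_N).

Definition cplx m n (B : 'M[R]_(m, n)) : 'M[C]_(m, n) := map_mx (real_complex R) B.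

Lemma conj_real (r : R) : Num.conj (r%:C%C : C) = r%:C%C.
Proof. exact: conjc_real. Qed.

Lemma cplx_adjoint m n (B : 'M[R]_(m, n)) : map_mx Num.conj (cplx B)^T = cplx B^T.
Proof. by apply/matrixP => i j; rewrite !mxE conj_real. Qed.

Local Notation U := (spectralmx (cplx M)).
Local Notation d := (spectral_diag (cplx M)).

Lemma cplx_normal : cplx M \is normalmx.
Proof. by apply/eqP; rewrite cplx_adjoint Msym. Qed.

Lemma unitary_adjointK : map_mx Num.conj U^T *m U = 1%:M.
Proof. by rewrite -invmx_unitary ?spectral_unitarymx // mulVmx ?spectral_unit. Qed.

Definition coords u : 'cV[C]_N := U *m cplx u.

Lemma dotv_coords u v :
  (dotv u v)%:C%C = \sum_i Num.conj (coords u i 0) * coords v i 0.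
Proof.
have -> : (dotv u v)%:C%C = (cplx (u^T *m v)) 0 0 by rewrite mxE.
rewrite /cplx map_mxM -/(cplx _) -/(cplx v) -cplx_adjoint -[cplx v]mul1mx.
rewrite -unitary_adjointK !mulmxA -map_mxM -trmx_mul -/(coords u) -mulmxA.
by rewrite -/(coords v) mxE; apply: eq_bigr => i _; rewrite !mxE.
Qed.

Lemma coords_mul u i : coords (M *m u) i 0 = d 0 i * coords u i 0.
Proof.
have Mdiag : cplx M = invmx U *m diag_mx d *m U := orthomx_spectralP cplx_normal.
have cplxM : cplx (M *m u) = cplx M *m cplx u by exact: map_mxM.
rewrite /coords cplxM [X in _ *m (X *m _)]Mdiag !mulmxA mulmxV ?spectral_unit //.
by rewrite mul1mx -mulmxA mul_diag_mx mxE.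
Qed.

Lemma char_poly_spectral : char_poly (cplx M) = \prod_(i < N) ('X - (d 0 i)%:P).
Proof.
rewrite {1}(orthomx_spectralP cplx_normal) char_poly_similar; last first.
  exact/mulVmx/spectral_unit.
rewrite char_poly_trig ?diag_mx_is_trig //.
by apply: eq_bigr => i _; rewrite mxE eqxx mulr1n.
Qed.

Definition sqmod (z : C) : R := complex.Re z ^+ 2 + complex.Im z ^+ 2.

Lemma conj_mulE (z : C) : Num.conj z * z = (sqmod z)%:C%C.
Proof.
case: z => a b; rewrite /sqmod /=.
change (conjc (a +i* b)%C * (a +i* b)%C = ((a ^+ 2 + b ^+ 2)%:C)%C).
by simpc; congr (_ +i* _)%C; rewrite ?expr2; ring.
Qed.

Definition weight u i : R := sqmod (coords u i 0).

Lemma weight_ge0 u i : 0 <= weight u i.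
Proof. by rewrite /weight /sqmod addr_ge0 // sqr_ge0. Qed.

Lemma dotv_weights u : dotv u u = \sum_i weight u i.
Proof.
apply: complexI; rewrite dotv_coords rmorph_sum /=.
by apply: eq_bigr => i _; rewrite conj_mulE.
Qed.

Variable lam : nat -> R.
Hypothesis charM : char_poly M = \prod_(i < N) ('X - (lam i)%:P).
Hypothesis lam_sorted : forall i j : nat, (i <= j < N)%N -> lam j <= lam i.
Hypothesis gap : lam 1 < lam 0.
Hypothesis N_gt1 : (1 < N)%N.

Lemma spectrum_perm :
  perm_eq [seq d 0 i | i <- enum 'I_N] [seq (lam i)%:C%C | i : 'I_N <- enum 'I_N].
Proof.
apply: prod_XsubC_eq; rewrite !big_map; apply: etrans (esym char_poly_spectral) _.
rewrite /cplx -map_char_poly charM rmorph_prod.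
by apply: eq_bigr => i _; rewrite /= map_polyXsubC.
Qed.

Lemma diag_in_spectrum i : exists j : 'I_N, d 0 i = (lam j)%:C%C.
Proof.
have : d 0 i \in [seq (lam i)%:C%C | i : 'I_N <- enum 'I_N].
  by rewrite -(perm_mem spectrum_perm); apply: map_f; rewrite mem_enum.
by case/mapP => j _ ->; exists j.
Qed.

Lemma lam_le1 (j : 'I_N) : j != 0%N :> nat -> lam j <= lam 1.
Proof. by move=> j0; apply: lam_sorted; rewrite ltn_ord andbT lt0n. Qed.

Lemma top_multiplicity :
  count_mem (lam 0)%:C%C [seq (lam i)%:C%C | i : 'I_N <- enum 'I_N] = 1%N.
Proof.
rewrite count_map -sum1_count big_enum_cond (bigD1 (Ordinal (ltnW N_gt1))) //=.
rewrite big_pred0 // => j; apply/negbTE/andP => [[/eqP/complexI lam_j j0]].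
have {}j0 : j != 0%N :> nat by apply: contra j0 => /eqP j0; apply/eqP/val_inj.
by have := lam_le1 j0; rewrite lam_j leNgt gap.
Qed.

Definition diag_re i : R := complex.Re (d 0 i).

Lemma diag_real i : d 0 i = (diag_re i)%:C%C.
Proof. by rewrite /diag_re; have [j ->] := diag_in_spectrum i. Qed.

Lemma top_index :
  exists k : 'I_N, diag_re k = lam 0 /\ forall i, i != k -> diag_re i <= lam 1.
Proof.
have := top_multiplicity; rewrite -(permP spectrum_perm) count_map.
rewrite -sum1_count big_enum_cond.
have [k dk|none] := pickP (fun i => d 0 i == (lam 0)%:C%C); last first.
  by rewrite big_pred0.
rewrite (bigD1 k) //= => /eqP; rewrite eqSS sum_nat_eq0 => /forallP others.
exists k; split; first by rewrite /diag_re (eqP dk).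
move=> i ik; have [j dj] := diag_in_spectrum i.
have [j0|j0] := eqVneq (nat_of_ord j) 0%N; last by rewrite /diag_re dj lam_le1.
by have := others i; rewrite ik andbT dj j0 eqxx.
Qed.

Lemma rayleigh_weights u : dotv u (M *m u) = \sum_i diag_re i * weight u i.
Proof.
apply: complexI; rewrite dotv_coords rmorph_sum /=.
by apply: eq_bigr => i _; rewrite coords_mul mulrCA conj_mulE diag_real rmorphM.
Qed.

(* A unit eigenvector for lam 0 spans the k-th eigendirection, so its inner
   product with u measures exactly the weight of u on that direction. *)
Lemma top_weight k v1 u : (forall i, i != k -> diag_re i != lam 0) ->
  M *m v1 = lam 0 *: v1 -> dotv v1 v1 = 1 -> (dotv v1 u)^+2 = weight u k.
Proof.
move=> others Mv1 v1_unit.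
have coords0 i : i != k -> coords v1 i 0 = 0.
  move=> ik; have := coords_mul v1 i; rewrite Mv1 /coords /cplx map_mxZ /=.
  rewrite -scalemxAr mxE -/(coords v1) diag_real => /eqP.
  rewrite -subr_eq0 -mulrBl mulf_eq0 -rmorphB /= => /orP[/eqP dv|/eqP //].
  have : lam 0 - diag_re i = 0 by apply: complexI; rewrite dv.
  by move/eqP; rewrite subr_eq0 eq_sym (negbTE (others i ik)).
have wv1 : weight v1 k = 1.
  rewrite -v1_unit dotv_weights (bigD1 k) //= big1 ?addr0 // => i /coords0.
  by rewrite /weight /sqmod => ->; rewrite expr0n /= addr0.
have dv1 : (dotv v1 u)%:C%C = Num.conj (coords v1 k 0) * coords u k 0.
  rewrite dotv_coords (bigD1 k) //= big1 ?addr0 // => i /coords0 ->.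
  by rewrite conjC0 mul0r.
apply: complexI; rewrite rmorphXn /= expr2 -{1}conj_real dv1 rmorphM /=.
rewrite conjCK mulrACA [coords v1 k 0 * _]mulrC !conj_mulE -rmorphM /=.
by rewrite -/(weight v1 k) wv1 mul1r.
Qed.

Lemma simple_top_eigenvector : exists v1 : 'cV[R]_N,
  [/\ M *m v1 = lam 0 *: v1, dotv v1 v1 = 1 &
      forall u, dotv u (M *m u) <= lam 1 * dotv u u + (lam 0 - lam 1) * (dotv v1 u)^+2].
Proof.
have [k [dk others]] := top_index.
have root0 : root (char_poly M) (lam 0).
  apply/rootP; rewrite charM horner_prod (bigD1 (Ordinal (ltnW N_gt1))) //=.
  by rewrite hornerXsubC subrr mul0r.
have [v1 Mv1 v1_unit] := unit_eigenvector Msym root0.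
exists v1; split => // u.
have others' i : i != k -> diag_re i != lam 0.
  by move=> /others le1; apply: contraTneq le1 => ->; rewrite -ltNge.
rewrite (top_weight u others' Mv1 v1_unit) rayleigh_weights dotv_weights.
rewrite (bigD1 k) //= [in X in _ <= _ * X + _](bigD1 k) //= dk.
have rest : \sum_(i | i != k) diag_re i * weight u i <=
            lam 1 * \sum_(i | i != k) weight u i.
  rewrite mulr_sumr; apply: ler_sum => i ik.
  by apply: ler_wpM2r; [exact: weight_ge0 | exact: others].
lra.
Qed.

End SymmetricSpectrum.

Theorem theorem1 (R : realType) (N : nat) (M : 'M[R]_N) (lam : nat -> R) :
  M^T = M ->
  (1 < N)%N ->
  char_poly M = \prod_(i < N) ('X - (lam i)%:P) ->
  (forall i j : nat, (i <= j < N)%N -> lam j <= lam i) ->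
  lam 1%N < lam 0%N ->
  let eps := (lam 0%N - lam 1%N) / 5 in
  let eta := 3 * (lam 0%N - lam 1%N) / 10 in
  forall x : 'cV[R]_N, on_sphere x ->
    norm2 (rgrad M x) <= eps ->
    eta <= `| lambda_min_hess M x |.
Proof.
move=> Msym N_gt1 charM lam_sorted gap eps eta x /on_sphereE x_unit small_grad.
have [v1 [Mv1 v1_unit rayleigh_gap]] :=
  simple_top_eigenvector Msym charM lam_sorted gap N_gt1.
apply: (hess_min_gap Msym gap Mv1 v1_unit rayleigh_gap N_gt1 x_unit).
have eps_ge0 : 0 <= eps by rewrite divr_ge0 // subr_ge0 ltW.
by rewrite -norm2_sqr ler_sqr ?nnegrE ?sqrtr_ge0.
Qed.
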